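(* For every positive integer $n$, there exists a connected graph $G$ such that $\det(G) = 2n$ and $\det'(G) = n$.
   Context: A vertex subset $S$ of $G$ is a vertex determining set if the only automorphism of $G$ fixing every vertex of $S$ is the identity; the determining number $\det(G)$ is the minimum size of a vertex determining set. For a graph $G$ with at most one isolated vertex and no component isomorphic to $K_2$, an edge subset $T$ is an edge determining set if the only automorphism $\phi$ of $G$ satisfying $\{\phi(u),\phi(v)\}=\{u,v\}$ for all $\{u,v\}\in T$ is the identity; the determining index $\det'(G)$ is the minimum size of an edge determining set. *)

From mathcomp Require Import all_boot all_fingroup.
Set Implicit Arguments. Unset Strict Implicit. Unset Printing Implicit Defensive.

Section Graphs.
Variable T : finType.
Variable e : rel T.

Definition simple_graph : Prop := symmetric e /\ irreflexive e.

Definition connected_graph : Prop := forall x y : T, connect e x y.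

Definition is_automorphism (p : {perm T}) : Prop :=
  forall x y : T, e (p x) (p y) = e x y.

Definition vertex_determining (S : {set T}) : Prop :=
  forall p : {perm T}, is_automorphism p ->
    (forall x, x \in S -> p x = x) -> p = 1%g.

Definition is_determining_number (k : nat) : Prop :=
  (exists S : {set T}, vertex_determining S /\ #|S| = k) /\
  (forall S : {set T}, vertex_determining S -> k <= #|S|).

Definition edge_set : {set {set T}} :=
  [set [set x.1; x.2] | x in [set x : T * T | e x.1 x.2]].

Definition edge_determining (F : {set {set T}}) : Prop :=
  F \subset edge_set /\
  forall p : {perm T}, is_automorphism p ->
    (forall E, E \in F -> p @: E = E) -> p = 1%g.

Definition is_determining_index (k : nat) : Prop :=
  (exists F : {set {set T}}, edge_determining F /\ #|F| = k) /\
  (forall F : {set {set T}}, edge_determining F -> k <= #|F|).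

End Graphs.

(* G_n consists of a hub and n gadgets, each made of two twin pairs; swapping
   the two vertices of a twin pair is an automorphism, so a vertex determining
   set meets each of the 2n twin pairs, and an edge determining set has an edge
   meeting each of the n twin pairs adjacent to the hub, no edge meeting two of
   them.  Conversely, fixing one vertex of each twin pair, or merely fixing
   setwise in each gadget one edge between its two pairs, leaves no
   non-trivial automorphism. *)
From mathcomp Require Import all_boot all_fingroup.
Set Implicit Arguments. Unset Strict Implicit. Unset Printing Implicit Defensive.

Lemma card_transversal_leq (I U : finType) (S : {set U}) (R : I -> pred U) :
  (forall i, exists2 x, x \in S & R i x) ->
  (forall i j x, x \in S -> R i x -> R j x -> i = j) -> #|I| <= #|S|.
Proof.
move=> hit disj.
have /fin_all_exists [f fP] : forall i, exists x, (x \in S) && R i x.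
  by move=> i; have [x xS Rx] := hit i; exists x; rewrite xS.
have f_inj : injective f.
  by move=> i j fij; have /andP [fS Ri] := fP i; have /andP [_] := fP j;
     rewrite -fij; exact: disj.
rewrite -cardsT -(card_imset _ f_inj); apply: subset_leq_card.
by apply/subsetP => _ /imsetP [i _ ->]; have /andP [] := fP i.
Qed.

Lemma perm_fix_last (T : finType) (p : {perm T}) (z : T) :
  (forall x, x != z -> p x = x) -> p z = z.
Proof.
move=> fixp; case: (eqVneq (p z) z) => // pz.
by move/perm_inj: (fixp _ pz) => pzz; rewrite pzz eqxx in pz.
Qed.

Section Twins.
Variables (T : finType) (e : rel T).
Hypotheses (e_sym : symmetric e) (e_irr : irreflexive e).
Variables a b : T.
Hypothesis twins : forall y, y != a -> y != b -> e a y = e b y.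

Lemma tperm_twins_aut : is_automorphism e (tperm a b).
Proof.
have twins' y : y != a -> y != b -> e y a = e y b.
  by move=> ya yb; rewrite ![e y _]e_sym; exact: twins.
move=> x y; case: tpermP => [->|->|/eqP xa /eqP xb];
  case: tpermP => [->|->|/eqP ya /eqP yb] //;
  first [ by rewrite !e_irr | by rewrite e_sym
        | by rewrite ?twins ?twins' // eq_sym ].
Qed.

Hypothesis a_neq_b : a != b.

Lemma tperm_twins_neq1 : tperm a b != 1%g.
Proof.
apply: contraNneq a_neq_b => /permP /(_ a).
by rewrite tpermL perm1 => ->.
Qed.

Lemma vertex_determining_twins (S : {set T}) :
  vertex_determining e S -> (a \in S) || (b \in S).
Proof.
move=> detS; apply/negPn/negP; rewrite negb_or => /andP [aS bS].
case/negP: tperm_twins_neq1; apply/eqP.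
apply: detS => [|x xS]; first exact: tperm_twins_aut.
by apply: tpermD; [apply: contraNneq aS => -> | apply: contraNneq bS => ->].
Qed.

Lemma edge_determining_twins (F : {set {set T}}) :
  edge_determining e F -> exists2 E, E \in F & (a \in E) || (b \in E).
Proof.
move=> [_ detF].
have [/exists_inP // | /exists_inPn avoid] :=
  boolP [exists E in F, (a \in E) || (b \in E)].
case/negP: tperm_twins_neq1; apply/eqP.
apply: detF => [|E EF]; first exact: tperm_twins_aut.
rewrite -[RHS]imset_id; apply: eq_in_imset => x xE.
by move: (avoid E EF); rewrite negb_or => /andP [aE bE];
   apply: tpermD; [apply: contraNneq aE => -> | apply: contraNneq bE => ->].
Qed.

End Twins.

Section Gadgets.
Variable n : nat.

(* The hub is [None]; gadget [i] has vertices [gv i c t].  The pair with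
   [c = false] is adjacent to the hub but not to each other, the pair with
   [c = true] is an edge, and the two pairs are completely joined. *)
Definition vertex := option ('I_n * (bool * bool)).

Definition gv (i : 'I_n) (c t : bool) : vertex := Some (i, (c, t)).

Definition adj (x y : vertex) : bool :=
  match x, y with
  | Some (i, s), Some (j, t) => [&& i == j, s != t & s.1 || t.1]
  | None, Some (_, t) => ~~ t.1
  | Some (_, s), None => ~~ s.1
  | None, None => false
  end.

Lemma adj_sym : symmetric adj.
Proof.
by case=> [[i [[] []]]|]; case=> [[j [[] []]]|] //=; rewrite (eq_sym i j).
Qed.

Lemma adj_irr : irreflexive adj.
Proof. by case=> [[i s]|] //=; rewrite !eqxx. Qed.

Lemma adj_connected : connected_graph adj.
Proof.
have to_hub x : connect adj x None.
  case: x => [[i [[] t]]|] //; last exact: connect1.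
  apply: (connect_trans (y := gv i false false)); last exact: connect1.
  by apply: connect1; rewrite /= eqxx.
move=> x y; apply: connect_trans (to_hub x) _.
by rewrite (sym_connect_sym adj_sym); exact: to_hub.
Qed.

Lemma adj_gadget_eq i j s t : adj (Some (i, s)) (Some (j, t)) -> i = j.
Proof. by case/and3P=> /eqP. Qed.

Lemma gv_twins i c y : y != gv i c false -> y != gv i c true ->
  adj (gv i c false) y = adj (gv i c true) y.
Proof.
case: y => [[j [[] []]]|] //=; case: c => //=;
  by case: (eqVneq i j) => [<-|]; rewrite /gv ?eqxx.
Qed.

Lemma gv_twins_neq i c : gv i c false != gv i c true.
Proof. by apply/eqP; case. Qed.

Lemma aut_fix_gadget (p : {perm vertex}) i : is_automorphism adj p ->
  p (gv i false false) = gv i false false ->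
  p (gv i true false) = gv i true false ->
  forall c t, p (gv i c t) = gv i c t.
Proof.
move=> autp pa pc.
have pd : p (gv i true true) = gv i true true.
  have := autp (gv i false false) (gv i true true).
  have := autp (gv i true false) (gv i true true).
  rewrite pa pc /= !eqxx.
  case: (p (gv i true true)) => [[j [[] []]]|] //=; rewrite ?andbF ?andbT //.
  by move=> /eqP <-.
have pb : p (gv i false true) = gv i false true.
  have := autp (gv i false false) (gv i false true).
  have := autp (gv i true false) (gv i false true).
  rewrite pa pc /= !eqxx.
  case E: (p (gv i false true)) => [[j [[] []]]|] //=; rewrite ?andbF ?andbT //.
  - by move=> ->.
  - by move=> /eqP <-.
  move=> /eqP ij _; subst j.
  by move: (etrans E (esym pa)) => /perm_inj.
by case=> [] [].
Qed.

Lemma aut_fix_edge (p : {perm vertex}) i : is_automorphism adj p ->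
  let E := [set gv i false false; gv i true false] in p @: E = E ->
  p (gv i false false) = gv i false false /\
  p (gv i true false) = gv i true false.
Proof.
move=> autp E pE; set a := gv i false false; set c := gv i true false.
have mem x : x \in E -> p x \in E by move=> xE; rewrite -pE imset_f.
have pa : p a = a.
  (* A swap would fix d, the only common neighbour of a and c, and send the
     hub to a neighbour of c not adjacent to d; there is none. *)
  case/set2P: (mem _ (set21 _ _)) => // pac.
  have pca : p c = a.
    case/set2P: (mem _ (set22 _ _)) => // pcc.
    by move: (etrans pac (esym pcc)) => /perm_inj.
  have pd : p (gv i true true) = gv i true true.
    have := autp a (gv i true true); have := autp c (gv i true true).
    rewrite pac pca /= !eqxx.
    case: (p (gv i true true)) => [[j [[] []]]|] //=; rewrite ?andbF ?andbT //.
    by move=> /eqP <-.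
  have := autp a None; have := autp (gv i true true) None; rewrite pac pd /=.
  case ph: (p None) => [[j [[] []]]|] //=; rewrite ?andbF ?andbT //.
  - move=> _ /eqP ij; subst j.
    by move: (etrans ph (esym pd)) => /perm_inj.
  - by move=> ->.
  - by move=> ->.
split=> //; case/set2P: (mem _ (set22 _ _)) => // pca.
by move: (etrans pca (esym pa)) => /perm_inj.
Qed.

Lemma aut_fixing_sides_eq1 (p : {perm vertex}) : is_automorphism adj p ->
  (forall i, p (gv i false false) = gv i false false /\
             p (gv i true false) = gv i true false) -> p = 1%g.
Proof.
move=> autp fix_sides.
have pg i c t : p (gv i c t) = gv i c t.
  by have [pa pc] := fix_sides i; exact: aut_fix_gadget.
apply/permP => -[[i [c t]]|]; rewrite perm1; first exact: pg.
by apply: perm_fix_last => -[[j [c t]]|] // _; exact: pg.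
Qed.

Lemma edge_gadget_eq x y i j s t : adj x y ->
  Some (i, s) \in [set x; y] -> Some (j, t) \in [set x; y] -> i = j.
Proof.
move=> xy; rewrite !inE => /orP[]/eqP ei /orP[]/eqP ej.
- by move: ej; rewrite -ei => -[].
- by rewrite -ei -ej in xy; exact: adj_gadget_eq xy.
- by rewrite -ei -ej adj_sym in xy; rewrite (adj_gadget_eq xy).
- by move: ej; rewrite -ei => -[].
Qed.

Lemma determining_number_gadgets : is_determining_number adj (2 * n).
Proof.
have card_sides : #|{: 'I_n * bool}| = 2 * n.
  by rewrite card_prod card_ord card_bool mulnC.
split.
  exists [set gv k.1 k.2 false | k : 'I_n * bool]; split.
    move=> p autp fixS; apply: aut_fixing_sides_eq1 => // i.
    by split; apply: fixS; apply/imsetP; [exists (i, false) | exists (i, true)].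
  by rewrite card_imset ?cardsT // => -[i c] [j d] [-> ->].
move=> S detS; rewrite -card_sides.
apply: (card_transversal_leq
  (R := fun k x => (x == gv k.1 k.2 false) || (x == gv k.1 k.2 true))).
  move=> [i c]; have /orP [aS | bS] :=
    vertex_determining_twins adj_sym adj_irr (@gv_twins i c)
                             (gv_twins_neq i c) detS.
    by exists (gv i c false); rewrite ?eqxx.
  by exists (gv i c true); rewrite ?eqxx ?orbT.
by move=> [i c] [j d] x _ /orP[]/eqP-> /orP[]/eqP[-> ->].
Qed.

Lemma determining_index_gadgets : is_determining_index adj n.
Proof.
split.
  exists [set [set gv i false false; gv i true false] | i : 'I_n]; split.
    split.
      apply/subsetP => _ /imsetP [i _ ->]; apply/imsetP.
      by exists (gv i false false, gv i true false); rewrite // inE /= eqxx.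
    move=> p autp fixF; apply: aut_fixing_sides_eq1 => // i.
    by apply: aut_fix_edge => //; apply: fixF; exact: imset_f.
  rewrite card_imset ?cardsT ?card_ord // => i j Eij.
  have : gv i false false \in [set gv j false false; gv j true false].
    by rewrite -Eij set21.
  by case/set2P => -[].
move=> F detF; rewrite -[leqLHS]card_ord.
apply: (card_transversal_leq
  (R := fun i (E : {set vertex}) =>
          (gv i false false \in E) || (gv i false true \in E))).
  move=> i; exact: (edge_determining_twins adj_sym adj_irr (@gv_twins i false)
                      (gv_twins_neq i false) detF).
move=> i j E EF; have /imsetP [[x y]] := subsetP detF.1 E EF.
rewrite inE /= => xy ->.
by move=> /orP [] ei /orP [] ej; exact: edge_gadget_eq xy ei ej.
Qed.

End Gadgets.

Theorem theorem9 : forall n : nat, 0 < n ->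
  exists (T : finType) (e : rel T),
    simple_graph e /\ connected_graph e /\
    is_determining_number e (2 * n) /\ is_determining_index e n.
Proof.
move=> n _; exists (vertex n), (@adj n).
split; first by split; [exact: adj_sym | exact: adj_irr].
split; first exact: adj_connected.
split; [exact: determining_number_gadgets | exact: determining_index_gadgets].
Qed.
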